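(* For all $n\ge k\ge1$, $$\mathbf{Sf}_{n,k}(p,q)\big|_{p^0}=q^{n-k}\begin{bmatrix} n-1\\ k-1\end{bmatrix}_q,$$ and for all $n>k\ge3$, $$\mathbf{Sf}_{n,k}(p,q)\big|_{p}=q^{n-k}\sum_{s=1}^{k-2}s\,q^{s-1}\sum_{i=0}^{n-k-1}q^{i(s+1)}\begin{bmatrix} i+k-s-2\\ i\end{bmatrix}_q\begin{bmatrix} s+n-k-i\\ s+1\end{bmatrix}_q.$$
   Context: $F_1(p,q)=q$, $F_2(p,q)=q^2$ and $F_m(p,q)=qF_{m-1}(p,q)+pF_{m-2}(p,q)$ for $m\ge3$. Let $(x)_{\downarrow_{F,p,q,0}}=1$ and $(x)_{\downarrow_{F,p,q,k}}=x(x-F_1(p,q))\cdots(x-F_{k-1}(p,q))$ for $k\ge1$. Define $\mathbf{Sf}_{n,k}(p,q)$ for $0\le k\le n$ by $x^n=\sum_{k=0}^n\mathbf{Sf}_{n,k}(p,q)(x)_{\downarrow_{F,p,q,k}}$; it is a polynomial in $p,q$. For a polynomial $f$ in $p$ (with coefficients polynomials in $q$), $f|_{p^s}$ denotes the coefficient of $p^s$. $[m]_q=1+q+\cdots+q^{m-1}$, $[m]_q!=[m]_q[m-1]_q\cdots[1]_q$ with $[0]_q!=1$, and $\begin{bmatrix} n\\ k\end{bmatrix}_q=\frac{[n]_q!}{[k]_q![n-k]_q!}$. *)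

(* Polynomials in p,q: {poly {poly int}}, the outer variable
   is p, the inner one (coefficients) is q. *)
From mathcomp Require Import all_boot all_order all_algebra.
Set Implicit Arguments. Unset Strict Implicit. Unset Printing Implicit Defensive.
Import GRing.Theory.
Local Open Scope ring_scope.

Definition PQ := {poly {poly int}}.
Definition qv : PQ := ('X : {poly int})%:P.
Definition pv : PQ := 'X.

(* Fibonacci polynomials, with F_0 := 0 (convenient for the falling factorial) *)
Fixpoint Fib (m : nat) : PQ :=
  match m with
  | 0 => 0
  | 1 => qv
  | 2 => qv ^+ 2
  | (m'.+1 as m1).+1 => qv * Fib m1 + pv * Fib m'
  end.

Definition ffallF (k : nat) : {poly PQ} := \prod_(i < k) ('X - (Fib i)%:P).

Definition qint (m : nat) : {poly int} := \sum_(i < m) 'X^i.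
Definition qfact (m : nat) : {poly int} := \prod_(i < m) qint i.+1.
Definition qbinom (n k : nat) : {poly int} := qfact n %/ (qfact k * qfact (n - k)).

From mathcomp Require Import all_boot all_order all_algebra.
From mathcomp Require Import zify ring.

(* Multiplying (x)_k by x gives (x)_{k+1} + F_k (x)_k, so Sf obeys the
   Stirling-type recurrence Sf_{n+1,k+1} = Sf_{n,k} + F_{k+1} Sf_{n,k+1}, and
   the falling factorials, monic of distinct degrees, make Sf unique. At p = 0
   we have F_k = q^k and the recurrence is the q-Pascal rule. The p-coefficient
   of F_k is (k-2) q^(k-2), so the p-coefficients of Sf satisfy the same
   q-Pascal recurrence driven by the source (k-1) q^(k-1) Sf_{n,k+1}|_{p^0}.
   By linearity they are a sum over s of the responses to the source at
   k = s+1, and each response is a convolution of two q-binomials, checked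
   against the recurrence by q-Pascal again. *)

Set Implicit Arguments.
Unset Strict Implicit.
Unset Printing Implicit Defensive.
Import GRing.Theory.
Local Open Scope ring_scope.

Fixpoint qbin (n k : nat) : {poly int} :=
  match n, k with
  | _, 0 => 1
  | 0, _.+1 => 0
  | n'.+1, k'.+1 => qbin n' k' + 'X^(k'.+1) * qbin n' k'.+1
  end.

Lemma qbin0 n : qbin n 0 = 1. Proof. by case: n. Qed.

Lemma qbinS n k : qbin n.+1 k.+1 = qbin n k + 'X^(k.+1) * qbin n k.+1.
Proof. by []. Qed.

Lemma qbin_small n k : (n < k)%N -> qbin n k = 0.
Proof.
elim: n k => [|n IHn] [|k] //= ltnk.
by rewrite !IHn ?mulr0 ?addr0 //; lia.
Qed.

Lemma qbinn n : qbin n n = 1.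
Proof. by elim: n => //= n ->; rewrite qbin_small ?mulr0 ?addr0. Qed.

Lemma qintE m : qint m = \poly_(i < m) 1.
Proof. by rewrite poly_def; apply: eq_bigr => i _; rewrite scale1r. Qed.

Lemma qintD a b : qint (a + b) = qint a + 'X^a * qint b.
Proof.
rewrite /qint big_split_ord /= mulr_sumr; congr (_ + _).
by apply: eq_bigr => i _; rewrite exprD.
Qed.

Lemma qint_monic m : qint m.+1 \is monic.
Proof. by rewrite qintE; apply/monicP; rewrite lead_coef_poly ?oner_neq0. Qed.

Lemma qfactS m : qfact m.+1 = qfact m * qint m.+1.
Proof. by rewrite /qfact big_ord_recr. Qed.

Lemma qfact_monic m : qfact m \is monic.
Proof. by apply: monic_prod => i _; apply: qint_monic. Qed.

Lemma qfact_qbin n k :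
  (k <= n)%N -> qfact n = qbin n k * (qfact k * qfact (n - k)).
Proof.
elim: n k => [|n IHn] [|k] lekn.
- by rewrite /qfact !big_ord0 !mulr1.
- by [].
- by rewrite qbin0 mul1r subn0 /qfact big_ord0 mul1r.
rewrite qbinS subSS qfactS.
have [ltkn|leqnk] := ltnP k n; last first.
  have -> : k = n by lia.
  rewrite qbinn qbin_small // subnn mulr0 addr0 mul1r /qfact big_ord0 mulr1.
  by rewrite big_ord_recr.
have qint_split : qint n.+1 = qint k.+1 + 'X^(k.+1) * qint (n - k).
  by rewrite -qintD; congr qint; lia.
have qfact_split : qfact (n - k) = qfact (n - k.+1) * qint (n - k).
  have -> : (n - k = (n - k.+1).+1)%N by lia.
  exact: qfactS.
rewrite qint_split mulrDr {1}(IHn k) 1?ltnW // (IHn k.+1) // qfact_split qfactS.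
ring.
Qed.

Lemma qbinomE n k : (k <= n)%N -> qbinom n k = qbin n k.
Proof.
move=> lekn; rewrite /qbinom (qfact_qbin lekn) Pdiv.IdomainMonic.mulpK //.
by rewrite monicMl qfact_monic.
Qed.

Lemma qbin_sub n k : (k <= n)%N -> qbin n (n - k) = qbin n k.
Proof.
move=> lekn; rewrite -!qbinomE ?leq_subr //.
by rewrite /qbinom subKn // mulrC.
Qed.

Lemma coefM0 (R : nzSemiRingType) (a b : {poly R}) : (a * b)`_0 = a`_0 * b`_0.
Proof. by rewrite coefM big_ord1. Qed.

Lemma coefM1 (R : nzSemiRingType) (a b : {poly R}) :
  (a * b)`_1 = a`_0 * b`_1 + a`_1 * b`_0.
Proof. by rewrite coefM big_ord_recr big_ord1. Qed.

Lemma FibSS k : Fib k.+3 = qv * Fib k.+2 + pv * Fib k.+1.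
Proof. by []. Qed.

Lemma coef_qvM (a : PQ) i : (qv * a)`_i = 'X * a`_i.
Proof. exact: coefCM. Qed.

Lemma coef_pvM (a : PQ) i : (pv * a)`_i = if i is i'.+1 then a`_i' else 0.
Proof. by rewrite /pv coefXM; case: i. Qed.

Lemma Fib_coef0 k : (Fib k.+1)`_0 = 'X^(k.+1).
Proof.
suff Fib_coef0_pair : (Fib k.+1)`_0 = 'X^(k.+1) /\ (Fib k.+2)`_0 = 'X^(k.+2).
  exact: Fib_coef0_pair.1.
elim: k => [|k [_ IHk]]; first by rewrite /= /qv -rmorphXn !coefC.
by split=> //; rewrite FibSS coefD coef_qvM coef_pvM addr0 IHk -exprS.
Qed.

(* [k - 2] is truncated, which gives the right value [0] for [k <= 2]. *)
Lemma Fib_coef1 k : (Fib k)`_1 = (k - 2)%:R * 'X^(k - 2).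
Proof.
suff Fib_coef1_pair : (Fib k)`_1 = (k - 2)%:R * 'X^(k - 2) /\
                      (Fib k.+1)`_1 = (k.+1 - 2)%:R * 'X^(k.+1 - 2).
  exact: Fib_coef1_pair.1.
elim: k => [|k [_ IHk]]; first by rewrite /= /qv coef0 coefC mul0r.
split=> //; case: k IHk => [|k] IHk.
  by rewrite /= /qv -rmorphXn coefC mul0r.
rewrite FibSS coefD coef_qvM coef_pvM IHk Fib_coef0 !subSS !subn0 /=.
by rewrite exprS -addn1 natrD; ring.
Qed.

Lemma ffallFS k : ffallF k.+1 = ffallF k * ('X - (Fib k)%:P).
Proof. by rewrite /ffallF big_ord_recr. Qed.

Lemma mulX_ffallF k : 'X * ffallF k = ffallF k.+1 + Fib k *: ffallF k.
Proof. by rewrite ffallFS -mul_polyC; ring. Qed.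

Lemma ffallF_monic k : ffallF k \is monic.
Proof. exact: monic_prod_XsubC. Qed.

Lemma size_ffallF k : size (ffallF k) = k.+1.
Proof.
by rewrite size_prod_XsubC /index_enum; unlock; rewrite -enumT size_enum_ord.
Qed.

Lemma monic_basis_free (R : nzRingType) (b : nat -> {poly R}) (c : nat -> R) m :
  (forall k, b k \is monic) -> (forall k, size (b k) = k.+1) ->
  \sum_(k < m) c k *: b k = 0 -> forall k, (k < m)%N -> c k = 0.
Proof.
move=> b_monic size_b; elim: m => [//|m IHm].
rewrite big_ord_recr /= => sum_eq0.
have cm0 : c m = 0.
  have := congr1 (fun a : {poly R} => a`_m) sum_eq0.
  rewrite coefD coef_sum big1 => [|k _]; last first.
    by rewrite coefZ nth_default ?mulr0 // size_b.
  rewrite add0r coefZ coef0.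
  have /monicP := b_monic m; rewrite lead_coefE size_b /= => ->.
  by rewrite mulr1.
move: sum_eq0; rewrite cm0 scale0r addr0 => /IHm ck0 k.
by rewrite ltnS leq_eqVlt => /predU1P [->|]; last exact: ck0.
Qed.

Fixpoint stirF (n k : nat) : PQ :=
  match n, k with
  | 0, 0 => 1
  | 0, _.+1 | _.+1, 0 => 0
  | n'.+1, k'.+1 => stirF n' k' + Fib k'.+1 * stirF n' k'.+1
  end.

Lemma stirFS n k : stirF n.+1 k.+1 = stirF n k + Fib k.+1 * stirF n k.+1.
Proof. by []. Qed.

Lemma stirF_small n k : (n < k)%N -> stirF n k = 0.
Proof.
elim: n k => [|n IHn] [|k] //= ltnk.
by rewrite !IHn ?mulr0 ?addr0 //; lia.
Qed.

Lemma Xn_stirF n : ('X^n : {poly PQ}) = \sum_(k < n.+1) stirF n k *: ffallF k.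
Proof.
elim: n => [|n IHn]; first by rewrite big_ord1 scale1r /ffallF big_ord0.
set g := fun k => (Fib k * stirF n k) *: ffallF k.
have g_sum : \sum_(k < n.+1) g k.+1 = \sum_(k < n.+1) g k.
  have g0 : g 0%N = 0 by rewrite /g mul0r scale0r.
  have gSn : g n.+1 = 0 by rewrite /g stirF_small // mulr0 scale0r.
  have := @big_ord_recr _ 0 +%R n.+1 (fun k => g k).
  by rewrite big_ord_recl /= g0 gSn add0r addr0.
rewrite big_ord_recl scale0r add0r exprS IHn mulr_sumr.
under eq_bigr do rewrite -scalerAr mulX_ffallF scalerDr scalerA mulrC.
under [RHS]eq_bigr do rewrite lift0 stirFS scalerDl.
by rewrite !big_split /= g_sum.
Qed.

Lemma Sf_stirF (Sf : nat -> nat -> PQ) :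
  (forall n, ('X^n : {poly PQ}) = \sum_(k < n.+1) Sf n k *: ffallF k) ->
  forall n k, (k <= n)%N -> Sf n k = stirF n k.
Proof.
move=> hSf n k lekn; apply/eqP; rewrite -subr_eq0; apply/eqP.
apply: (monic_basis_free (c := fun k => Sf n k - stirF n k) (m := n.+1)
                          ffallF_monic size_ffallF _ lekn).
under eq_bigr do rewrite scalerBl.
by rewrite sumrB -hSf -Xn_stirF subrr.
Qed.

Lemma stirF_coef0S n k :
  (stirF n.+1 k.+1)`_0 = (stirF n k)`_0 + 'X^(k.+1) * (stirF n k.+1)`_0.
Proof. by rewrite stirFS coefD coefM0 Fib_coef0. Qed.

Lemma stirF_coef1S n k :
  (stirF n.+1 k.+1)`_1 = (stirF n k)`_1 + 'X^(k.+1) * (stirF n k.+1)`_1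
                          + (k - 1)%:R * 'X^(k - 1) * (stirF n k.+1)`_0.
Proof.
by rewrite stirFS coefD coefM1 Fib_coef0 Fib_coef1 subSS subn1 addrA.
Qed.

Lemma stirF_coef0 n k : (stirF n.+1 k.+1)`_0 = 'X^(n - k) * qbin n k.
Proof.
elim: n k => [|n IHn] [|k]; rewrite stirF_coef0S.
- by rewrite /= coef1 coef0 mulr0 addr0 mulr1.
- by rewrite /= coef0 mulr0 addr0 mulr0.
- by rewrite coef0 add0r IHn subn0 qbin0 !mulr1 -exprS.
rewrite !IHn qbinS mulrDr subSS; congr (_ + _).
have [ltkn|lenk] := ltnP k n; last by rewrite qbin_small ?mulr0 //; lia.
by rewrite !mulrA -!exprD; congr (_ ^+ _ * _); lia.
Qed.

(* [qconv s (k - s - 2) (n - k)] is the response at [(n, k)] to the source at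
   [k = s + 1]; for [m = 0] the sum is empty, so the junk exponent [0.-1] is
   harmless. *)
Definition qconv (s c m : nat) : {poly int} :=
  'X^(m.-1) *
  \sum_(i < m) 'X^(i * s.+1) * qbin (i + c) c * qbin (s + m - i) s.+1.

Lemma qconv0 s c : qconv s c 0 = 0.
Proof. by rewrite /qconv big_ord0 mulr0. Qed.

Lemma qconvSr s c m :
  qconv s c.+1 m.+1 = qconv s c m.+1 + 'X^(s + c + 3) * qconv s c.+1 m.
Proof.
rewrite /qconv /= big_ord_recl [in RHS]big_ord_recl !add0n !qbinn.
rewrite !mulrDr -addrA.
congr (_ + _); case: m => [|m]; first by rewrite !big_ord0 !mulr0 addr0.
rewrite !mulr_sumr -big_split; apply: eq_bigr => i _.
rewrite lift0 addnS qbinS addSnnS (addnS s m.+1) subSS.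
rewrite /= mulSn !exprD !exprS; ring.
Qed.

Lemma qconvS0 s m :
  qconv s 0 m.+1 = 'X^(s + 2) * qconv s 0 m + 'X^m * qbin (s + m.+1) s.+1.
Proof.
rewrite /qconv /= big_ord_recl addrC mulrDr !qbin0 mul0n mul1r mul1r subn0.
congr (_ + _); case: m => [|m]; first by rewrite !big_ord0 !mulr0.
rewrite !mulr_sumr; apply: eq_bigr => i _.
rewrite !qbin0 /= addnS subSS.
by rewrite !mulSn !exprD !exprS; ring.
Qed.

Definition coef1_term (s n k : nat) : {poly int} :=
  if (s.+1 < k)%N then qconv s (k - s.+2) (n - k) else 0.

Lemma coef1_termS s n k :
  coef1_term s n.+1 k.+1 = coef1_term s n k + 'X^(k.+1) * coef1_term s n k.+1
                           + (if k == s.+1 then (stirF n k.+1)`_0 else 0).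
Proof.
rewrite /coef1_term !ltnS; case: (ltngtP k s.+1) => [ltks|ltsk|->].
- by rewrite mulr0 !addr0.
- rewrite [(k.+1 - _)%N]subSn // [(n.+1 - _)%N]subSS [(n - k.+1)%N]subnS addr0.
  case: (n - k)%N => [|m]; first by rewrite !qconv0 mulr0 addr0.
  by rewrite qconvSr; congr (_ + 'X^_ * _); lia.
- rewrite subnn add0r.
  case: (leqP n s.+1) => [lens|ltsn].
    rewrite stirF_small ?ltnS // coef0 addr0.
    have /eqP -> : (n.+1 - s.+2 == 0)%N by rewrite subn_eq0.
    have /eqP -> : (n - s.+2 == 0)%N by rewrite subn_eq0 ltnW.
    by rewrite !qconv0 mulr0.
  have [m ->] : exists m, n = (s.+2 + m)%N by exists (n - s.+2)%N; lia.
  rewrite -addnS !addKn addSn stirF_coef0 addKn addSnnS.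
  by rewrite qconvS0 addn2.
Qed.

Lemma coef1_term_small s n k : (k <= s.+1)%N -> coef1_term s n k = 0.
Proof. by rewrite /coef1_term leqNgt => /negbTE ->. Qed.

Lemma coef1_term0 s k : coef1_term s 0 k = 0.
Proof. by rewrite /coef1_term qconv0; case: ifP. Qed.

Lemma stirF_coef1 N n k : (n <= N)%N ->
  (stirF n k)`_1 = \sum_(s < N) s%:R * 'X^s * coef1_term s n k.
Proof.
elim: n k => [|n IHn] k leNn.
  rewrite big1 => [|s _]; last by rewrite coef1_term0 mulr0.
  by case: k => [|k]; rewrite /= ?coefC ?coef0.
case: k => [|k].
  by rewrite coef0 big1 // => s _; rewrite coef1_term_small ?mulr0.
have source :
    \sum_(s < N) s%:R * 'X^s * (if k == s.+1 then (stirF n k.+1)`_0 else 0)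
    = (k - 1)%:R * 'X^(k - 1) * (stirF n k.+1)`_0.
  case: k => [|k]; first by rewrite !mul0r big1 // => s _; rewrite mulr0.
  under eq_bigr do rewrite eqSS eq_sym (fun_if (fun a => _ * a)) mulr0.
  rewrite -big_mkcond subn1 /=.
  rewrite (big_ord1_eq _ (fun s : nat => s%:R * 'X^s * (stirF n k.+2)`_0)).
  by case: ltnP => // leNk; rewrite stirF_small ?coef0 ?mulr0 //; lia.
rewrite stirF_coef1S !IHn 1?ltnW // -source mulr_sumr -!big_split /=.
by apply: eq_bigr => s _; rewrite coef1_termS !mulrDr mulrCA.
Qed.

Lemma coef1_termE s n k : (0 < s)%N -> (s.+1 < k)%N -> (k < n)%N ->
  s%:R * 'X^s * coef1_term s n k =
  'X^(n - k) * (s%:R * 'X^(s - 1) *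
    \sum_(0 <= i < n - k) ('X^(i * (s + 1)) * qbinom (i + k - s - 2) i
                             * qbinom (s + n - k - i) s.+1)).
Proof.
move=> s_gt0 ltsk ltkn; rewrite /coef1_term ltsk /qconv big_mkord.
have [m nkE] : exists m, (n - k = m.+1)%N by exists (n - k).-1; lia.
rewrite nkE !mulr_sumr; apply: eq_bigr => i _; have := ltn_ord i => ltim.
rewrite qbinomE ?qbinomE; [|lia|lia].
rewrite (_ : i + k - s - 2 = i + (k - s.+2))%N; last lia.
rewrite -(qbin_sub (leq_addr (k - s.+2) i)) addKn.
rewrite (_ : s + n - k - i = s + m.+1 - i)%N ?addn1; last lia.
have Xs : 'X^s = 'X * 'X^(s - 1) :> {poly int} by rewrite -exprS subn1 prednK.
by rewrite Xs exprS; ring.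
Qed.

Theorem theorem11 (Sf : nat -> nat -> PQ)
  (hSf : forall n : nat, ('X^n : {poly PQ}) = \sum_(k < n.+1) Sf n k *: ffallF k) :
  (forall n k : nat, (1 <= k)%N -> (k <= n)%N ->
     (Sf n k)`_0 = 'X^(n - k) * qbinom n.-1 k.-1)
  /\
  (forall n k : nat, (3 <= k)%N -> (k < n)%N ->
     (Sf n k)`_1 = 'X^(n - k) *
        \sum_(1 <= s < k - 1) (s%:R * 'X^(s - 1) *
          \sum_(0 <= i < n - k) ('X^(i * (s + 1)) * qbinom (i + k - s - 2) i
                                   * qbinom (s + n - k - i) s.+1))).
Proof.
split=> [[|n] [|k] // _ lekn | n k le3k ltkn].
  by rewrite (Sf_stirF hSf lekn) stirF_coef0 subSS /= qbinomE.
rewrite (Sf_stirF hSf (ltnW ltkn)) (stirF_coef1 k (leqnn n)) mulr_sumr.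
rewrite -(big_mkord xpredT (fun s => s%:R * 'X^s * coef1_term s n k)).
rewrite big_ltn ?mul0r ?add0r; last by lia.
rewrite (@big_nat_widen _ _ _ 1 (k - 1) n); last by lia.
rewrite big_mkcond [RHS]big_mkcond; apply: eq_big_nat => s /andP [s_gt0 _] /=.
case: ltnP => [ltsk | leks].
  by rewrite coef1_termE // -ltn_predRL -subn1.
by rewrite coef1_term_small ?mulr0 //; lia.
Qed.
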